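(* Let $\alpha<1$ be a real number and $k\ge 2$ an integer. Let $A\subset\mathbb{N}$ be such that $A(X)\le C\frac{\sqrt{X}}{(\log X)^{\alpha}}$ for some constant $C>0$ and all sufficiently large $X$. Then there is a constant $C'>0$ such that for all sufficiently large $X$, $$A^k(X)\le C'\sqrt{X}(\log X)^{k-1-k\alpha}.$$
   Context: $\mathbb{N}$ is the set of positive integers; $A^1=A$, $A^k=AA^{k-1}$ where $AB=\{ab:a\in A,b\in B\}$; for $S\subset\mathbb{N}_0$, $S(X)=|S\cap[1,X]|$. *)

From Stdlib Require Export Reals Lra Lia List ClassicalEpsilon.
Export ListNotations.
Open Scope R_scope.

Definition prodset (A B : nat -> Prop) : nat -> Prop :=
  fun n => exists a b, A a /\ B b /\ n = (a * b)%nat.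

(* A^1 = A, A^k = A A^(k-1); (A^0 is set to A by convention, never used). *)
Fixpoint setpow (A : nat -> Prop) (k : nat) : nat -> Prop :=
  match k with
  | O => A
  | S O => A
  | S k' => prodset A (setpow A k')
  end.

Definition ind (S : nat -> Prop) (n : nat) : nat :=
  if excluded_middle_informative (S n) then 1%nat else 0%nat.

(* Counting function S(X) = |S ∩ [1, X]| for real X (floor X = Int_part X). *)
Definition cnt (S : nat -> Prop) (X : R) : R :=
  INR (fold_right plus 0%nat (map (ind S) (seq 1 (Z.to_nat (Int_part X))))).

From Stdlib Require Import Lra Lia ZArith.

(* Work at dyadic scales: say that B has dyadic exponent b if
   B(2^t) <= D 2^(t/2) (t+1)^b for all t.  The hypothesis gives exponent -alpha
   for A.  Sorting a in A into the blocks [2^i, 2^(i+1)) gives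
   (AB)(2^t) <= sum_(i <= t) A(2^(i+1)) B(2^(t-i)), and the discrete Beta-integral
   estimate sum_(i <= t) (i+1)^(-alpha) (t-i+1)^b << (t+1)^(b+1-alpha), valid for
   -alpha > -1 and b > -1, shows that AB has exponent b+1-alpha.  By induction A^k
   has exponent k-1-k alpha (which stays > -1 because alpha < 1), and interpolating
   between consecutive powers of 2 gives the bound for every large X. *)

Section NatSums.
Local Open Scope nat_scope.

Definition nsum (f : nat -> nat) (lo n : nat) : nat := list_sum (map f (seq lo n)).

Lemma nsum_S f lo n : nsum f lo (S n) = f lo + nsum f (S lo) n.
Proof. reflexivity. Qed.

Lemma nsum_split f lo n m : nsum f lo (n + m) = nsum f lo n + nsum f (lo + n) m.
Proof. unfold nsum. now rewrite seq_app, map_app, list_sum_app. Qed.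

Lemma nsum_cut f lo n k : k <= n -> nsum f lo n = nsum f lo k + nsum f (lo + k) (n - k).
Proof. intros Hk. rewrite <- nsum_split. f_equal. lia. Qed.

Lemma nsum_last f lo n : nsum f lo (S n) = nsum f lo n + f (lo + n).
Proof. rewrite <- Nat.add_1_r, nsum_split, nsum_S. cbn. lia. Qed.

Lemma nsum_le f g lo n :
  (forall i, lo <= i < lo + n -> f i <= g i) -> nsum f lo n <= nsum g lo n.
Proof.
  revert lo; induction n as [|n IH]; intros lo Hfg; [reflexivity|].
  rewrite !nsum_S. apply Nat.add_le_mono; [apply Hfg; lia|].
  apply IH. intros i Hi. apply Hfg. lia.
Qed.

Lemma nsum_const c lo n : nsum (fun _ => c) lo n = n * c.
Proof. revert lo; induction n as [|n IH]; intro lo; [reflexivity|]. rewrite nsum_S, IH. lia. Qed.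

Lemma nsum_zero f lo n : (forall i, lo <= i < lo + n -> f i = 0) -> nsum f lo n = 0.
Proof.
  intros Hf. apply Nat.le_0_r. transitivity (nsum (fun _ => 0) lo n).
  - apply nsum_le. intros i Hi. now rewrite Hf.
  - now rewrite nsum_const, Nat.mul_0_r.
Qed.

Lemma nsum_add f g lo n : nsum (fun i => f i + g i) lo n = nsum f lo n + nsum g lo n.
Proof. revert lo; induction n as [|n IH]; intro lo; [reflexivity|]. rewrite !nsum_S, IH. lia. Qed.

Lemma nsum_mul_l c f lo n : nsum (fun i => c * f i) lo n = c * nsum f lo n.
Proof. revert lo; induction n as [|n IH]; intro lo; [cbn; lia|]. rewrite !nsum_S, IH. lia. Qed.

Lemma nsum_exch (F : nat -> nat -> nat) lo1 n1 lo2 n2 :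
  nsum (fun i => nsum (F i) lo2 n2) lo1 n1 = nsum (fun j => nsum (fun i => F i j) lo1 n1) lo2 n2.
Proof.
  revert lo1; induction n1 as [|n1 IH]; intro lo1.
  - symmetry. now apply nsum_zero.
  - rewrite nsum_S, IH, <- nsum_add. reflexivity.
Qed.

Lemma nsum_subrange_le f lo n lo' n' :
  lo' <= lo -> lo + n <= lo' + n' -> nsum f lo n <= nsum f lo' n'.
Proof.
  intros Hlo Hhi. replace n' with ((lo - lo') + (n + (lo' + n' - (lo + n)))) by lia.
  rewrite !nsum_split. replace (lo' + (lo - lo')) with lo by lia. lia.
Qed.

Lemma nsum_ge_term f lo n i : lo <= i < lo + n -> f i <= nsum f lo n.
Proof.
  intros Hi. transitivity (nsum f i 1); [cbn; lia|]. apply nsum_subrange_le; lia.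
Qed.

Lemma nsum_eqb_le c lo n :
  nsum (fun i => Nat.b2n (c =? i)) lo n <= Nat.b2n ((lo <=? c) && (c <? lo + n)).
Proof.
  revert lo; induction n as [|n IH]; intro lo; [cbn; lia|].
  rewrite nsum_S. specialize (IH (S lo)).
  destruct (Nat.eqb_spec c lo), (Nat.leb_spec (S lo) c), (Nat.ltb_spec c (S lo + n)),
    (Nat.leb_spec lo c), (Nat.ltb_spec c (lo + S n)); cbn in *; lia.
Qed.

Lemma nsum_dyadic_blocks f j :
  nsum f 1 (2 ^ j - 1) = nsum (fun i => nsum f (2 ^ i) (2 ^ i)) 0 j.
Proof.
  induction j as [|j IH]; [reflexivity|].
  pose proof (Nat.pow_nonzero 2 j ltac:(lia)).
  rewrite nsum_last, <- IH, Nat.add_0_l.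
  replace (2 ^ S j - 1) with ((2 ^ j - 1) + 2 ^ j) by (cbn; lia).
  rewrite nsum_split. replace (1 + (2 ^ j - 1)) with (2 ^ j) by lia. reflexivity.
Qed.

End NatSums.

Lemma INR_nsum f t : INR (nsum f 0 (S t)) = sum_f_R0 (fun i => INR (f i)) t.
Proof.
  induction t as [|t IH].
  - cbn. now rewrite Nat.add_0_r.
  - now rewrite nsum_last, plus_INR, IH.
Qed.

Definition ncnt (B : nat -> Prop) (m : nat) : nat := nsum (ind B) 1 m.

Lemma cnt_INR B m : cnt B (INR m) = INR (ncnt B m).
Proof. unfold cnt, ncnt, nsum, list_sum. now rewrite Int_part_INR, Nat2Z.id. Qed.

Lemma cnt_floor B X : 0 <= X -> exists m, cnt B X = INR (ncnt B m) /\ INR m <= X < INR m + 1.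
Proof.
  intros HX. destruct (base_Int_part X) as [Hlo Hhi].
  assert (Hz : (-1 < Int_part X)%Z) by (apply lt_IZR; lra).
  exists (Z.to_nat (Int_part X)).
  split; [reflexivity|]. rewrite INR_IZR_INZ, Z2Nat.id by lia. lra.
Qed.

Section Counting.
Local Open Scope nat_scope.

Lemma ind_le_1 B n : ind B n <= 1.
Proof. unfold ind. destruct (excluded_middle_informative (B n)); lia. Qed.

Lemma ncnt_le B m : ncnt B m <= m.
Proof.
  transitivity (nsum (fun _ => 1) 1 m).
  - apply nsum_le. intros i _. apply ind_le_1.
  - rewrite nsum_const. lia.
Qed.

Lemma ncnt_mono B m m' : m <= m' -> ncnt B m <= ncnt B m'.
Proof. intros Hm. apply nsum_subrange_le; lia. Qed.

Lemma ind_prodset_le A B M n : 1 <= n <= M ->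
  ind (prodset A B) n <=
  nsum (fun a => nsum (fun b => ind A a * ind B b * Nat.b2n (a * b =? n)) 1 M) 1 M.
Proof.
  intros Hn. unfold ind at 1.
  destruct (excluded_middle_informative _) as [[a [b [Ha [Hb ->]]]]|]; [|lia].
  assert (1 <= a /\ 1 <= b) as [Ha1 Hb1] by (destruct a, b; cbn in *; lia).
  eapply Nat.le_trans; [|apply (nsum_ge_term _ 1 M a); nia].
  eapply Nat.le_trans; [|apply (nsum_ge_term _ 1 M b); nia].
  unfold ind. destruct (excluded_middle_informative (A a)); [|tauto].
  destruct (excluded_middle_informative (B b)); [|tauto].
  rewrite Nat.eqb_refl. reflexivity.
Qed.

Lemma ncnt_prodset_le A B M :
  ncnt (prodset A B) M <=
  nsum (fun a => ind A a * nsum (fun b => ind B b * Nat.b2n (a * b <=? M)) 1 M) 1 M.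
Proof.
  transitivity (nsum (fun n => nsum (fun a => nsum (fun b =>
      ind A a * ind B b * Nat.b2n (a * b =? n)) 1 M) 1 M) 1 M).
  { apply nsum_le. intros n Hn. apply ind_prodset_le. lia. }
  rewrite nsum_exch. apply nsum_le. intros a _.
  rewrite nsum_exch, <- nsum_mul_l. apply nsum_le. intros b _.
  rewrite nsum_mul_l, <- Nat.mul_assoc. apply Nat.mul_le_mono_l.
  pose proof (nsum_eqb_le (a * b) 1 M).
  destruct (Nat.leb_spec (a * b) M), (Nat.leb_spec 1 (a * b)), (Nat.ltb_spec (a * b) (1 + M));
    cbn in *; nia.
Qed.

Lemma nsum_ind_le_ncnt B a M q : q <= M -> M < a * S q ->
  nsum (fun b => ind B b * Nat.b2n (a * b <=? M)) 1 M <= ncnt B q.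
Proof.
  intros HqM Ha. rewrite (nsum_cut _ 1 M q HqM), (nsum_zero _ (1 + q)), Nat.add_0_r.
  - apply nsum_le. intros b _. destruct (a * b <=? M); cbn; lia.
  - intros b Hb. destruct (Nat.leb_spec (a * b) M); [|cbn; lia]. nia.
Qed.

Lemma ncnt_prodset_dyadic A B T :
  ncnt (prodset A B) (2 ^ T) <=
  nsum (fun i => ncnt A (2 ^ S i) * ncnt B (2 ^ (T - i))) 0 (S T).
Proof.
  pose proof (Nat.pow_nonzero 2 T ltac:(lia)).
  eapply Nat.le_trans; [apply ncnt_prodset_le|].
  eapply Nat.le_trans; [apply (nsum_subrange_le _ 1 _ 1 (2 ^ S T - 1)); cbn; lia|].
  rewrite nsum_dyadic_blocks. apply nsum_le. intros i Hi.
  pose proof (Nat.pow_nonzero 2 i ltac:(lia)).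
  assert (E : 2 ^ T = 2 ^ i * 2 ^ (T - i)) by (rewrite <- Nat.pow_add_r; f_equal; lia).
  transitivity (nsum (fun a => ncnt B (2 ^ (T - i)) * ind A a) (2 ^ i) (2 ^ i)).
  - apply nsum_le. intros a Ha. rewrite Nat.mul_comm. apply Nat.mul_le_mono_r.
    apply nsum_ind_le_ncnt; nia.
  - rewrite nsum_mul_l, Nat.mul_comm. apply Nat.mul_le_mono_r.
    apply nsum_subrange_le; cbn; lia.
Qed.

End Counting.

Lemma exp_le x y : x <= y -> exp x <= exp y.
Proof. intros [Hlt| ->]; [left; now apply exp_increasing|lra]. Qed.

Lemma ln_le x y : 0 < x -> x <= y -> ln x <= ln y.
Proof. intros Hx [Hlt| ->]; [left; now apply ln_increasing|lra]. Qed.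

Lemma Rpower_pos x y : 0 < Rpower x y.
Proof. apply exp_pos. Qed.

Lemma Rpower_1_base c : Rpower 1 c = 1.
Proof. unfold Rpower. now rewrite ln_1, Rmult_0_r, exp_0. Qed.

Lemma INR_add1_pos i : 0 < INR i + 1.
Proof. pose proof (pos_INR i). lra. Qed.

Lemma Rpower_le_comparable x y K c : 0 < x -> 0 < y -> x <= K * y -> y <= K * x ->
  Rpower x c <= Rpower K (Rabs c) * Rpower y c.
Proof.
  intros Hx Hy Hxy Hyx.
  assert (HK : 0 < K) by nra.
  unfold Rpower. rewrite <- exp_plus. apply exp_le.
  assert (ln x <= ln K + ln y) by (rewrite <- ln_mult by lra; now apply ln_le).
  assert (ln y <= ln K + ln x) by (rewrite <- ln_mult by lra; now apply ln_le).
  destruct (Rle_dec 0 c); [rewrite Rabs_right by lra|rewrite Rabs_left by lra]; nra.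
Qed.

Lemma ln_sub1_le x : 1 < x -> ln (x - 1) <= ln x - 1 / x.
Proof.
  intros Hx.
  assert (Hq : 0 < (x - 1) / x) by (apply Rdiv_lt_0_compat; lra).
  replace (x - 1) with (x * ((x - 1) / x)) by (field; lra).
  rewrite ln_mult by lra.
  pose proof (exp_ineq1_le (ln ((x - 1) / x))) as Hexp. rewrite exp_ln in Hexp by exact Hq.
  assert ((x - 1) / x = 1 - 1 / x) by (field; lra). lra.
Qed.

(* A crude form of concavity of [x ^ g]: (x - 1)^g <= x^g e^(-g/x) <= x^g (1 - g/(2x)). *)
Lemma Rpower_increment_ge x g : 1 < x -> 0 < g < 1 ->
  Rpower x (g - 1) <= 2 / g * (Rpower x g - Rpower (x - 1) g).
Proof.
  intros Hx Hg.
  assert (Hgx : 0 < g / x <= 1).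
  { split; [apply Rdiv_lt_0_compat; lra|]. apply Rmult_le_reg_r with x; [lra|].
    unfold Rdiv. rewrite Rmult_assoc, Rinv_l; lra. }
  assert (Hxg : Rpower x g = Rpower x (g - 1) * x).
  { replace g with ((g - 1) + 1) at 1 by ring. now rewrite Rpower_plus, Rpower_1 by lra. }
  assert (Hshift : Rpower (x - 1) g <= Rpower x g * exp (- (g / x))).
  { unfold Rpower. rewrite <- exp_plus. apply exp_le.
    pose proof (ln_sub1_le x Hx).
    assert (g * ln (x - 1) <= g * (ln x - 1 / x)) by (apply Rmult_le_compat_l; lra).
    unfold Rdiv in *. lra. }
  assert (Hdecay : exp (- (g / x)) <= 1 - g / x / 2).
  { rewrite exp_Ropp. pose proof (exp_ineq1_le (g / x)).
    apply Rle_trans with (/ (1 + g / x)); [apply Rinv_le_contravar; lra|].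
    apply Rmult_le_reg_r with (1 + g / x); [lra|]. rewrite Rinv_l by lra. nra. }
  pose proof (Rpower_pos x (g - 1)).
  assert (Rpower (x - 1) g <= Rpower x g * (1 - g / x / 2)).
  { eapply Rle_trans; [apply Hshift|]. apply Rmult_le_compat_l; [left; apply Rpower_pos|lra]. }
  rewrite Hxg in *.
  assert (Rpower x (g - 1) * x * (g / x / 2) = Rpower x (g - 1) * (g / 2)) by (field; lra).
  apply Rmult_le_reg_l with (g / 2); [lra|].
  replace (g / 2 * (2 / g * (Rpower x (g - 1) * x - Rpower (x - 1) g)))
    with (Rpower x (g - 1) * x - Rpower (x - 1) g) by (field; lra).
  nra.
Qed.

Lemma sum_Rpower_le c : -1 < c -> exists E, 0 < E /\ forall t,
  sum_f_R0 (fun i => Rpower (INR i + 1) c) t <= E * Rpower (INR t + 1) (c + 1).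
Proof.
  intros Hc. destruct (Rle_dec 0 c) as [Hc0|Hc0].
  - exists 1. split; [lra|]. intros t.
    apply Rle_trans with (sum_f_R0 (fun _ => Rpower (INR t + 1) c) t).
    + apply sum_Rle. intros i Hi. apply Rle_Rpower_l; [lra|].
      split; [apply INR_add1_pos|]. apply Rplus_le_compat_r, le_INR, Hi.
    + rewrite sum_cte, Rpower_plus, Rpower_1, S_INR by apply INR_add1_pos. lra.
  - set (g := c + 1). assert (Hg : 0 < g < 1) by (unfold g; lra).
    assert (Htele : forall t, sum_f_R0 (fun i => Rpower (INR i + 1) c) t
                              <= 1 + 2 / g * (Rpower (INR t + 1) g - 1)).
    { induction t as [|t IH].
      - cbn. rewrite Rplus_0_l, !Rpower_1_base. lra.
      - cbn [sum_f_R0]. pose proof (Rpower_increment_ge (INR (S t) + 1) g) as Hinc.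
        rewrite S_INR in *. replace (g - 1) with c in Hinc by (unfold g; ring).
        replace (INR t + 1 + 1 - 1) with (INR t + 1) in Hinc by ring.
        pose proof (pos_INR t). specialize (Hinc ltac:(lra) Hg). lra. }
    assert (0 < 2 / g) by (apply Rdiv_lt_0_compat; lra).
    exists (1 + 2 / g). split; [lra|]. intros t.
    assert (1 <= Rpower (INR t + 1) g).
    { rewrite <- (Rpower_O (INR t + 1)) at 1 by apply INR_add1_pos.
      apply Rle_Rpower; [pose proof (pos_INR t)|]; lra. }
    eapply Rle_trans; [apply Htele|]. fold g. nra.
Qed.

Lemma sum_f_R0_rev h t : sum_f_R0 (fun i => h (t - i)%nat) t = sum_f_R0 h t.
Proof.
  revert h; induction t as [|t IH]; intro h; [reflexivity|].
  rewrite tech5, Nat.sub_diag, (decomp_sum h (S t)) by lia. cbn [pred].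
  rewrite <- (IH (fun i => h (S i))). rewrite Rplus_comm. f_equal.
  apply sum_eq. intros i Hi. f_equal. lia.
Qed.

(* One of [x], [y] is at least [n / 2], so its power is comparable to that of [n]. *)
Lemma Rpower_mul_le_split x y n a b :
  0 < x -> 0 < y -> x <= n -> y <= n -> n <= x + y ->
  Rpower x a * Rpower y b <=
  (Rpower 2 (Rabs a) + Rpower 2 (Rabs b)) * (Rpower n b * Rpower x a + Rpower n a * Rpower y b).
Proof.
  intros Hx Hy Hxn Hyn Hn.
  set (xa := Rpower x a); set (yb := Rpower y b); set (na := Rpower n a); set (nb := Rpower n b).
  set (Ka := Rpower 2 (Rabs a)); set (Kb := Rpower 2 (Rabs b)).
  assert (0 < xa /\ 0 < yb /\ 0 < na /\ 0 < nb /\ 0 < Ka /\ 0 < Kb) as (? & ? & ? & ? & ? & ?)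
    by (repeat split; apply Rpower_pos).
  assert (0 < Ka * na * yb /\ 0 < Kb * nb * xa) as [? ?]
    by (split; apply Rmult_lt_0_compat; try apply Rmult_lt_0_compat; assumption).
  destruct (Rle_dec x y).
  - assert (yb <= Kb * nb) by (apply Rpower_le_comparable; lra).
    assert (xa * yb <= xa * (Kb * nb)) by (apply Rmult_le_compat_l; lra).
    assert (Kb * nb * xa <= (Ka + Kb) * nb * xa)
      by (apply Rmult_le_compat_r; [lra|]; apply Rmult_le_compat_r; lra).
    nra.
  - assert (xa <= Ka * na) by (apply Rpower_le_comparable; lra).
    assert (xa * yb <= Ka * na * yb) by (apply Rmult_le_compat_r; lra).
    assert (Ka * na * yb <= (Ka + Kb) * na * yb)
      by (apply Rmult_le_compat_r; [lra|]; apply Rmult_le_compat_r; lra).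
    nra.
Qed.

Lemma sum_Rpower_conv_le a b : -1 < a -> -1 < b -> exists E, 0 < E /\ forall t,
  sum_f_R0 (fun i => Rpower (INR i + 1) a * Rpower (INR (t - i) + 1) b) t
    <= E * Rpower (INR t + 1) (a + b + 1).
Proof.
  intros Ha Hb.
  destruct (sum_Rpower_le a Ha) as [Ea [HEa Hsa]], (sum_Rpower_le b Hb) as [Eb [HEb Hsb]].
  set (K := Rpower 2 (Rabs a) + Rpower 2 (Rabs b)).
  assert (HK : 0 < K)
    by (pose proof (Rpower_pos 2 (Rabs a)); pose proof (Rpower_pos 2 (Rabs b)); unfold K; lra).
  exists (K * (Ea + Eb)). split; [nra|]. intros t.
  set (n := INR t + 1).
  eapply Rle_trans.
  - apply (sum_Rle _ (fun i => Rpower (INR i + 1) a * (K * Rpower n b)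
                              + Rpower (INR (t - i) + 1) b * (K * Rpower n a))).
    intros i Hi. eapply Rle_trans; [apply (Rpower_mul_le_split _ _ n)|right; unfold K; ring].
    all: try apply INR_add1_pos; unfold n.
    + apply Rplus_le_compat_r, le_INR. exact Hi.
    + apply Rplus_le_compat_r, le_INR. lia.
    + rewrite minus_INR by exact Hi. pose proof (pos_INR i). lra.
  - rewrite plus_sum, <- !scal_sum.
    rewrite (sum_f_R0_rev (fun j => Rpower (INR j + 1) b)).
    specialize (Hsa t). specialize (Hsb t). fold n in Hsa, Hsb.
    assert (Hna : Rpower n a * Rpower n (b + 1) = Rpower n (a + b + 1))
      by (rewrite <- Rpower_plus; f_equal; ring).
    assert (Hnb : Rpower n b * Rpower n (a + 1) = Rpower n (a + b + 1))
      by (rewrite <- Rpower_plus; f_equal; ring).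
    replace (K * (Ea + Eb) * Rpower n (a + b + 1))
      with (K * Rpower n b * (Ea * Rpower n (a + 1)) + K * Rpower n a * (Eb * Rpower n (b + 1))).
    2: { transitivity (K * Ea * (Rpower n b * Rpower n (a + 1))
                       + K * Eb * (Rpower n a * Rpower n (b + 1))); [ring|].
         rewrite Hna, Hnb. ring. }
    pose proof (Rpower_pos n a). pose proof (Rpower_pos n b).
    apply Rplus_le_compat; apply Rmult_le_compat_l; auto; apply Rmult_le_pos; lra.
Qed.

Lemma sqrt_pow x n : 0 <= x -> sqrt (x ^ n) = sqrt x ^ n.
Proof.
  intros Hx. induction n as [|n IH]; cbn; [apply sqrt_1|].
  rewrite sqrt_mult by (try apply pow_le; assumption). now rewrite IH.
Qed.

Lemma sqrt2_pow_pos t : 0 < sqrt 2 ^ t.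
Proof. apply pow_lt, Rlt_sqrt2_0. Qed.

Lemma INR_pow2_sqrt t : INR (2 ^ t) = sqrt 2 ^ t * sqrt 2 ^ t.
Proof. rewrite pow_INR, <- Rpow_mult_distr, sqrt_sqrt by lra. reflexivity. Qed.

Lemma ln2_bounds : / 2 < ln 2 < 1.
Proof.
  split; [apply ln_lt_2|]. rewrite <- ln_exp. apply ln_increasing; [lra|].
  pose proof (exp_ineq1 1 ltac:(lra)). lra.
Qed.

Definition dyadic_bound (B : nat -> Prop) (b : R) : Prop :=
  exists D, 0 < D /\ forall t, INR (ncnt B (2 ^ t)) <= D * sqrt 2 ^ t * Rpower (INR t + 1) b.

Lemma dyadic_bound_eventually B b D T0 : 0 < D ->
  (forall t, (T0 <= t)%nat -> INR (ncnt B (2 ^ t)) <= D * sqrt 2 ^ t * Rpower (INR t + 1) b) ->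
  dyadic_bound B b.
Proof.
  intros HD Hlarge.
  set (L := Rpower (INR T0 + 1) (- Rabs b)).
  assert (HL : 0 < L) by apply Rpower_pos.
  set (D' := sqrt 2 ^ T0 / L).
  assert (HD' : 0 < D') by (apply Rdiv_lt_0_compat; [apply sqrt2_pow_pos|exact HL]).
  exists (D + D'). split; [lra|]. intros t.
  assert (Hpos : 0 < sqrt 2 ^ t * Rpower (INR t + 1) b)
    by (apply Rmult_lt_0_compat; [apply sqrt2_pow_pos|apply Rpower_pos]).
  rewrite Rmult_assoc. destruct (le_lt_dec T0 t) as [Ht|Ht].
  - specialize (Hlarge t Ht). rewrite Rmult_assoc in Hlarge. nra.
  - assert (HLt : L <= Rpower (INR t + 1) b).
    { unfold L, Rpower. apply exp_le.
      assert (0 <= ln (INR t + 1)).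
      { rewrite <- ln_1. apply ln_le; [lra|]. pose proof (pos_INR t). lra. }
      assert (ln (INR t + 1) <= ln (INR T0 + 1)).
      { apply ln_le; [apply INR_add1_pos|]. apply Rplus_le_compat_r, le_INR. lia. }
      destruct (Rle_dec 0 b); [rewrite Rabs_right by lra|rewrite Rabs_left by lra]; nra. }
    assert (Hsmall : INR (ncnt B (2 ^ t)) <= sqrt 2 ^ t * sqrt 2 ^ T0).
    { eapply Rle_trans; [apply le_INR, ncnt_le|].
      rewrite INR_pow2_sqrt. apply Rmult_le_compat_l; [left; apply sqrt2_pow_pos|].
      apply Rle_pow; [|lia]. rewrite <- sqrt_1. apply sqrt_le_1_alt. lra. }
    replace (sqrt 2 ^ T0) with (D' * L) in Hsmall by (unfold D'; field; lra).
    pose proof (sqrt2_pow_pos t).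
    assert (sqrt 2 ^ t * (D' * L) <= D' * (sqrt 2 ^ t * Rpower (INR t + 1) b)).
    { rewrite Rmult_comm, Rmult_assoc. apply Rmult_le_compat_l; [lra|].
      rewrite Rmult_comm. apply Rmult_le_compat_l; lra. }
    nra.
Qed.

Lemma dyadic_bound_of_cnt_bound A al :
  (exists C, 0 < C /\ exists X0, forall X, X0 <= X ->
      cnt A X <= C * sqrt X / Rpower (ln X) al) ->
  dyadic_bound A (- al).
Proof.
  intros [C [HC [X0 HX]]].
  destruct (INR_unbounded X0) as [n0 Hn0].
  pose proof ln2_bounds as Hln2.
  set (K := 2 / ln 2).
  assert (HK : K * ln 2 = 2) by (unfold K; field; lra).
  assert (HKC : 0 < C * Rpower K (Rabs (- al)))
    by (pose proof (Rpower_pos K (Rabs (- al))); nra).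
  apply (dyadic_bound_eventually _ _ _ (S n0) HKC). intros t Ht.
  assert (Ht1 : 1 <= INR t) by (apply (le_INR 1); lia).
  assert (HX0 : X0 <= INR (2 ^ t)).
  { assert (INR n0 <= INR (2 ^ t)) by (apply le_INR; pose proof (Nat.pow_gt_lin_r 2 t); lia). lra. }
  specialize (HX _ HX0).
  rewrite cnt_INR, pow_INR in HX. change (INR 2) with 2 in HX.
  rewrite sqrt_pow, ln_pow in HX by lra.
  unfold Rdiv in HX. rewrite <- Rpower_Ropp in HX.
  assert (Hcmp : Rpower (INR t * ln 2) (- al)
                 <= Rpower K (Rabs (- al)) * Rpower (INR t + 1) (- al)).
  { assert (HK2 : 2 <= K) by (apply Rmult_le_reg_r with (ln 2); nra).
    assert (INR t * ln 2 <= INR t) by nra.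
    apply Rpower_le_comparable; [nra|apply INR_add1_pos|nra|nra]. }
  eapply Rle_trans; [apply HX|].
  pose proof (sqrt2_pow_pos t).
  replace (C * Rpower K (Rabs (- al)) * sqrt 2 ^ t * Rpower (INR t + 1) (- al))
    with (C * sqrt 2 ^ t * (Rpower K (Rabs (- al)) * Rpower (INR t + 1) (- al))) by ring.
  apply Rmult_le_compat_l; [nra|exact Hcmp].
Qed.

Lemma dyadic_bound_prodset A B al b : -1 < - al -> -1 < b ->
  dyadic_bound A (- al) -> dyadic_bound B b -> dyadic_bound (prodset A B) (b + 1 - al).
Proof.
  intros Hal Hb [DA [HDA HA]] [DB [HDB HB]].
  destruct (sum_Rpower_conv_le (- al) b Hal Hb) as [E [HE Hconv]].
  set (K := Rpower 2 (Rabs (- al))).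
  assert (HK : 0 < K) by apply Rpower_pos.
  set (C0 := DA * DB * sqrt 2 * K).
  assert (HC0 : 0 < C0)
    by (unfold C0; pose proof Rlt_sqrt2_0; repeat apply Rmult_lt_0_compat; auto).
  exists (C0 * E). split; [now apply Rmult_lt_0_compat|]. intros t.
  eapply Rle_trans; [apply le_INR, ncnt_prodset_dyadic|]. rewrite INR_nsum.
  eapply Rle_trans.
  - apply (sum_Rle _ (fun i => Rpower (INR i + 1) (- al) * Rpower (INR (t - i) + 1) b
                                * (C0 * sqrt 2 ^ t))).
    intros i Hi. rewrite mult_INR.
    assert (HAi : INR (ncnt A (2 ^ S i))
                  <= DA * sqrt 2 ^ S i * (K * Rpower (INR i + 1) (- al))).
    { eapply Rle_trans; [apply HA|]. apply Rmult_le_compat_l.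
      - pose proof (sqrt2_pow_pos (S i)). nra.
      - apply Rpower_le_comparable; try apply INR_add1_pos; rewrite S_INR;
          pose proof (pos_INR i); lra. }
    eapply Rle_trans; [apply Rmult_le_compat; [apply pos_INR|apply pos_INR|apply HAi|apply HB]|].
    right. replace (sqrt 2 ^ S i) with (sqrt 2 * sqrt 2 ^ i) by reflexivity.
    replace (sqrt 2 ^ t) with (sqrt 2 ^ i * sqrt 2 ^ (t - i))
      by (rewrite <- pow_add; f_equal; lia).
    unfold C0. ring.
  - rewrite <- scal_sum. specialize (Hconv t).
    replace (- al + b + 1) with (b + 1 - al) in Hconv by ring.
    pose proof (sqrt2_pow_pos t).
    replace (C0 * E * sqrt 2 ^ t * Rpower (INR t + 1) (b + 1 - al))
      with (C0 * sqrt 2 ^ t * (E * Rpower (INR t + 1) (b + 1 - al))) by ring.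
    apply Rmult_le_compat_l; [nra|exact Hconv].
Qed.

Lemma dyadic_bound_setpow A al k : al < 1 -> dyadic_bound A (- al) -> (1 <= k)%nat ->
  dyadic_bound (setpow A k) (INR k - 1 - INR k * al).
Proof.
  intros Hal HA Hk. induction k as [|k IH]; [lia|].
  destruct k as [|k].
  - replace (INR 1 - 1 - INR 1 * al) with (- al) by (cbn; ring). exact HA.
  - change (setpow A (S (S k))) with (prodset A (setpow A (S k))).
    replace (INR (S (S k)) - 1 - INR (S (S k)) * al)
      with (INR (S k) - 1 - INR (S k) * al + 1 - al) by (rewrite (S_INR (S k)); ring).
    apply dyadic_bound_prodset; [lra| |exact HA|apply IH; lia].
    rewrite S_INR. pose proof (pos_INR k). nra.
Qed.

Lemma cnt_bound_of_dyadic_bound B b : dyadic_bound B b ->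
  exists C, 0 < C /\ exists X0, forall X, X0 <= X ->
    cnt B X <= C * sqrt X * Rpower (ln X) b.
Proof.
  intros [D [HD HB]].
  pose proof ln2_bounds as Hln2.
  set (K := 3 / ln 2).
  assert (HK : K * ln 2 = 3) by (unfold K; field; lra).
  set (Kb := Rpower K (Rabs b)).
  assert (HKb : 0 < Kb) by apply Rpower_pos.
  exists (D * sqrt 2 * Kb).
  split; [pose proof Rlt_sqrt2_0; repeat apply Rmult_lt_0_compat; auto|].
  exists 2. intros X HX.
  destruct (cnt_floor B X ltac:(lra)) as [m [-> [Hm1 Hm2]]].
  assert (Hm : (1 < m)%nat) by (apply INR_lt; cbn; lra).
  destruct (Nat.log2_spec m ltac:(lia)) as [Hlog1 Hlog2]. set (t := Nat.log2 m) in *.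
  assert (HtR : 1 <= INR t) by (apply (le_INR 1), Nat.log2_pos; exact Hm).
  assert (HXlo : 2 ^ t <= X).
  { apply le_INR in Hlog1. rewrite pow_INR in Hlog1. change (INR 2) with 2 in Hlog1. lra. }
  assert (HXhi : X <= 2 ^ S t).
  { apply le_INR in Hlog2. rewrite pow_INR, S_INR in Hlog2. change (INR 2) with 2 in Hlog2.
    lra. }
  assert (Hpow : 0 < 2 ^ t) by (apply pow_lt; lra).
  assert (HlnX : INR t * ln 2 <= ln X <= INR t * ln 2 + ln 2).
  { split; [rewrite <- ln_pow by lra; apply ln_le; lra|].
    replace (INR t * ln 2 + ln 2) with (INR (S t) * ln 2) by (rewrite S_INR; ring).
    rewrite <- ln_pow by lra. apply ln_le; lra. }
  assert (HK3 : 3 <= K) by (apply Rmult_le_reg_r with (ln 2); nra).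
  assert (Hcmp : Rpower (INR (S t) + 1) b <= Kb * Rpower (ln X) b).
  { rewrite S_INR. apply Rpower_le_comparable; nra. }
  assert (Hsqrt : sqrt 2 ^ t <= sqrt X)
    by (rewrite <- sqrt_pow by lra; apply sqrt_le_1_alt; exact HXlo).
  eapply Rle_trans; [apply le_INR, (ncnt_mono B m (2 ^ S t)); lia|].
  eapply Rle_trans; [apply HB|].
  pose proof (sqrt2_pow_pos t). pose proof (Rpower_pos (INR (S t) + 1) b). pose proof Rlt_sqrt2_0.
  replace (D * sqrt 2 * Kb * sqrt X * Rpower (ln X) b)
    with (D * sqrt 2 * sqrt X * (Kb * Rpower (ln X) b)) by ring.
  replace (D * sqrt 2 ^ S t * Rpower (INR (S t) + 1) b)
    with (D * sqrt 2 * sqrt 2 ^ t * Rpower (INR (S t) + 1) b) by (cbn [pow]; ring).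
  assert (0 < D * sqrt 2) by (apply Rmult_lt_0_compat; assumption).
  apply Rmult_le_compat; [left; apply Rmult_lt_0_compat; assumption|lra| |exact Hcmp].
  apply Rmult_le_compat_l; [lra|exact Hsqrt].
Qed.

Theorem corollary2p3 (alpha : R) (k : nat) (A : nat -> Prop) :
  alpha < 1 ->
  (2 <= k)%nat ->
  (forall n, A n -> (1 <= n)%nat) ->
  (exists C, 0 < C /\ exists X0, forall X, X0 <= X ->
      cnt A X <= C * sqrt X / Rpower (ln X) alpha) ->
  exists C', 0 < C' /\ exists X0, forall X, X0 <= X ->
      cnt (setpow A k) X <= C' * sqrt X * Rpower (ln X) (INR k - 1 - INR k * alpha).
Proof.
  intros Halpha Hk _ HA.
  apply cnt_bound_of_dyadic_bound, dyadic_bound_setpow; [exact Halpha| |lia].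
  now apply dyadic_bound_of_cnt_bound.
Qed.
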